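(* Let $n\ge1$, $t_1<\dots<t_n$, $p_0,\dots,p_n>0$, $q_k=p_k^{-1/2}$, and let $a_k^\pm,b_k^\pm$ be the connection coefficients defined in the context. Then for every $\lambda\in(0,\infty)$, $$\frac{|b_0^+(\lambda)|^2}{q_0^2}+\frac{1}{q_0q_n}=\frac{|a_0^+(\lambda)|^2}{q_0^2}=\frac{|b_n^-(\lambda)|^2}{q_n^2}=\frac{1}{q_0q_n}+\frac{|a_n^-(\lambda)|^2}{q_n^2}.$$
   Context: For $z\in\mathbb{C}\setminus(-\infty,0]$, $\sqrt z$ is the principal square root. For $1\le k\le n$ let $$L_k(z)=\frac12\begin{bmatrix}\left(1+\frac{q_k}{q_{k-1}}\right)e^{it_k(q_{k-1}-q_k)\sqrt z} & \left(1-\frac{q_k}{q_{k-1}}\right)e^{-it_k(q_{k-1}+q_k)\sqrt z}\\ \left(1-\frac{q_k}{q_{k-1}}\right)e^{it_k(q_{k-1}+q_k)\sqrt z} & \left(1+\frac{q_k}{q_{k-1}}\right)e^{-it_k(q_{k-1}-q_k)\sqrt z}\end{bmatrix},\qquad R_k(z)=L_k(z)^{-1}.$$ The connection coefficients are $a_n^+=1$, $b_n^+=0$, $(a_l^+,b_l^+)^T=R_{l+1}(z)(a_{l+1}^+,b_{l+1}^+)^T$ for $l=n-1,\dots,0$; and $a_0^-=0$, $b_0^-=1$, $(a_j^-,b_j^-)^T=L_j(z)(a_{j-1}^-,b_{j-1}^-)^T$ for $j=1,\dots,n$. *)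

From Stdlib Require Import Reals.
From Coquelicot Require Import Coquelicot.
Open Scope R_scope.

Definition cis (x : R) : C := (cos x, sin x).

(* 2x2 complex matrices ((m11, m12), (m21, m22)) and column vectors (v1, v2) *)
Definition M2 := ((C * C) * (C * C))%type.
Definition V2 := (C * C)%type.

Definition mv (M : M2) (v : V2) : V2 :=
  let '((m11, m12), (m21, m22)) := M in
  let '(v1, v2) := v in
  (Cplus (Cmult m11 v1) (Cmult m12 v2), Cplus (Cmult m21 v1) (Cmult m22 v2)).

Definition det2 (M : M2) : C :=
  let '((m11, m12), (m21, m22)) := M in Cminus (Cmult m11 m22) (Cmult m12 m21).

Definition inv2 (M : M2) : M2 :=
  let '((m11, m12), (m21, m22)) := M in
  let d := Cinv (det2 M) in
  ((Cmult d m22, Cmult d (Copp m12)), (Cmult d (Copp m21), Cmult d m11)).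

Definition qq (p : nat -> R) (k : nat) : R := / sqrt (p k).

(* L_k(lambda) for real lambda > 0: principal sqrt lambda is the real sqrt,
   and e^{i x} = cis x. *)
Definition Lmat (t p : nat -> R) (k : nat) (lam : R) : M2 :=
  let q0 := qq p (k - 1) in
  let q1 := qq p k in
  let s := sqrt lam in
  let c1 := RtoC ((1 + q1 / q0) / 2) in
  let c2 := RtoC ((1 - q1 / q0) / 2) in
  ((Cmult c1 (cis (t k * (q0 - q1) * s)), Cmult c2 (cis (- (t k * (q0 + q1) * s)))),
   (Cmult c2 (cis (t k * (q0 + q1) * s)), Cmult c1 (cis (- (t k * (q0 - q1) * s))))).

Definition Rmat (t p : nat -> R) (k : nat) (lam : R) : M2 := inv2 (Lmat t p k lam).

(* plus_vec n j = (a^+_{n-j}, b^+_{n-j}) *)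
Fixpoint plus_vec (t p : nat -> R) (n : nat) (lam : R) (j : nat) : V2 :=
  match j with
  | O => (RtoC 1, RtoC 0)
  | S j' => mv (Rmat t p (n - j') lam) (plus_vec t p n lam j')
  end.

Fixpoint minus_vec (t p : nat -> R) (lam : R) (j : nat) : V2 :=
  match j with
  | O => (RtoC 0, RtoC 1)
  | S j' => mv (Lmat t p (S j') lam) (minus_vec t p lam j')
  end.

Definition a_plus t p n lam l : C := fst (plus_vec t p n lam (n - l)).
Definition b_plus t p n lam l : C := snd (plus_vec t p n lam (n - l)).
Definition a_minus t p lam j : C := fst (minus_vec t p lam j).
Definition b_minus t p lam j : C := snd (minus_vec t p lam j).

From Stdlib Require Import Reals Lra Lia.
From Coquelicot Require Import Coquelicot.
Open Scope R_scope.

(* Every L_k has the form [[α, β], [conj β, conj α]] with |α|^2 - |β|^2 = q_k/q_(k-1).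
   Such matrices have determinant |α|^2 - |β|^2, commute with v ↦ (conj v2, conj v1), and
   scale the indefinite form |v1|^2 - |v2|^2 by their determinant.  Hence along the
   recursion the Wronskians of (a_l^+, b_l^+) against (a_l^-, b_l^-) and against its
   conjugate-swap, as well as |a_l^-|^2 - |b_l^-|^2, are each proportional to q_l.
   Comparing l = 0 with l = n gives a_0^+/q_0 = b_n^-/q_n, b_0^+/q_0 = -conj(a_n^-)/q_n
   and |a_n^-|^2 - |b_n^-|^2 = -q_n/q_0, from which the identities follow. *)

Lemma RtoC_neq0 (x : R) : x <> 0 -> RtoC x <> 0.
Proof. intros Hx E; apply Hx, RtoC_inj, E. Qed.

Lemma Cconj_RtoC (x : R) : Cconj (RtoC x) = RtoC x.
Proof. unfold Cconj, RtoC; cbn [fst snd]; f_equal; ring. Qed.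

Lemma Cmod_cis x : Cmod (cis x) = 1.
Proof.
unfold Cmod, cis; cbn [fst snd].
rewrite <- sqrt_1; f_equal.
rewrite <- (sin2_cos2 x); unfold Rsqr; ring.
Qed.

Lemma Cconj_scal_cis (c x : R) : Cconj (RtoC c * cis x)%C = (RtoC c * cis (- x))%C.
Proof.
unfold Cconj, cis, RtoC, Cmult; cbn [fst snd].
rewrite cos_neg, sin_neg.
f_equal; ring.
Qed.

Lemma Cmod_scal_sq (c : R) (z : C) : Cmod (RtoC c * z)%C ^ 2 = c ^ 2 * Cmod z ^ 2.
Proof. rewrite Cmod_mult, Cmod_R, Rpow_mult_distr, pow2_abs; reflexivity. Qed.

Definition wronskian (u w : V2) : C := (fst u * snd w - snd u * fst w)%C.

Definition conj_swap (v : V2) : V2 := (Cconj (snd v), Cconj (fst v)).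

Definition lorentz_form (v : V2) : R := Cmod (fst v) ^ 2 - Cmod (snd v) ^ 2.

Definition conj_sym_mx (α β : C) : M2 := ((α, β), (Cconj β, Cconj α)).

Lemma wronskian_mv_inv2 (M : M2) (w u : V2) :
  wronskian (mv (inv2 M) w) u = (/ det2 M * wronskian w (mv M u))%C.
Proof.
destruct M as [[m11 m12] [m21 m22]], w as [w1 w2], u as [u1 u2].
unfold inv2, wronskian, mv; cbn [fst snd].
generalize (/ det2 ((m11, m12), (m21, m22)))%C; intro d.
ring.
Qed.

Lemma det2_conj_sym α β :
  det2 (conj_sym_mx α β) = RtoC (Cmod α ^ 2 - Cmod β ^ 2).
Proof.
unfold det2, conj_sym_mx.
rewrite RtoC_minus, !Cmod2_conj.
ring.
Qed.

Lemma conj_swap_mv_conj_sym α β v :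
  conj_swap (mv (conj_sym_mx α β) v) = mv (conj_sym_mx α β) (conj_swap v).
Proof.
destruct v as [v1 v2].
unfold conj_swap, conj_sym_mx, mv; cbn [fst snd].
rewrite !Cplus_conj, !Cmult_conj, !Cconj_conj.
f_equal; ring.
Qed.

Lemma lorentz_form_mv_conj_sym α β v :
  lorentz_form (mv (conj_sym_mx α β) v) = (Cmod α ^ 2 - Cmod β ^ 2) * lorentz_form v.
Proof.
destruct v as [v1 v2].
apply RtoC_inj.
unfold lorentz_form, conj_sym_mx, mv; cbn [fst snd].
rewrite RtoC_mult, !RtoC_minus, !Cmod2_conj.
rewrite !Cplus_conj, !Cmult_conj, !Cconj_conj.
ring.
Qed.

Lemma Lmat_conj_sym t p k lam : exists α β,
  Lmat t p (S k) lam = conj_sym_mx α β /\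
  Cmod α ^ 2 - Cmod β ^ 2 = qq p (S k) / qq p k.
Proof.
unfold Lmat; replace (S k - 1)%nat with k by lia.
set (r := qq p (S k) / qq p k).
set (s := sqrt lam).
exists (RtoC ((1 + r) / 2) * cis (t (S k) * (qq p k - qq p (S k)) * s))%C,
  (RtoC ((1 - r) / 2) * cis (- (t (S k) * (qq p k + qq p (S k)) * s)))%C.
split.
- unfold conj_sym_mx; rewrite !Cconj_scal_cis, Ropp_involutive; reflexivity.
- rewrite !Cmod_scal_sq, !Cmod_cis; field.
Qed.

Lemma det2_Lmat t p k lam : det2 (Lmat t p (S k) lam) = RtoC (qq p (S k) / qq p k).
Proof.
destruct (Lmat_conj_sym t p k lam) as (α & β & -> & Hdet).
rewrite det2_conj_sym, Hdet; reflexivity.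
Qed.

Lemma conj_swap_mv_Lmat t p k lam v :
  conj_swap (mv (Lmat t p (S k) lam) v) = mv (Lmat t p (S k) lam) (conj_swap v).
Proof.
destruct (Lmat_conj_sym t p k lam) as (α & β & -> & _).
apply conj_swap_mv_conj_sym.
Qed.

Lemma lorentz_form_mv_Lmat t p k lam v :
  lorentz_form (mv (Lmat t p (S k) lam) v) = qq p (S k) / qq p k * lorentz_form v.
Proof.
destruct (Lmat_conj_sym t p k lam) as (α & β & -> & Hdet).
rewrite lorentz_form_mv_conj_sym, Hdet; reflexivity.
Qed.

Lemma qq_gt0 p k : 0 < p k -> 0 < qq p k.
Proof. intro Hp; apply Rinv_0_lt_compat, sqrt_lt_R0, Hp. Qed.

Lemma eq_last_first {T : Type} (g : nat -> T) (n : nat) :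
  (forall l, (l < n)%nat -> g (S l) = g l) -> g n = g 0%nat.
Proof.
induction n as [|n IH]; intro Hstep; [reflexivity|].
rewrite Hstep by lia; apply IH; intros l Hl; apply Hstep; lia.
Qed.

Section Connection.

Variables (t p : nat -> R) (n : nat) (lam : R).
Hypothesis p_pos : forall k, (k <= n)%nat -> 0 < p k.

Local Notation vplus l := (plus_vec t p n lam (n - l)).
Local Notation vminus l := (minus_vec t p lam l).

Let qq_neq0 k : (k <= n)%nat -> qq p k <> 0.
Proof. intro Hk; apply Rgt_not_eq, qq_gt0, p_pos, Hk. Qed.

Lemma plus_vec_pred l : (l < n)%nat -> vplus l = mv (Rmat t p (S l) lam) (vplus (S l)).
Proof.
intro Hl.
replace (n - l)%nat with (S (n - S l)) by lia; cbn [plus_vec].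
replace (n - (n - S l))%nat with (S l) by lia; reflexivity.
Qed.

Lemma wronskian_plus_minus_conserved (f : V2 -> V2) :
  (forall k v, f (mv (Lmat t p (S k) lam) v) = mv (Lmat t p (S k) lam) (f v)) ->
  (wronskian (vplus n) (f (vminus n)) / RtoC (qq p n))%C =
  (wronskian (vplus 0) (f (vminus 0)) / RtoC (qq p 0))%C.
Proof.
intro Hf.
apply (eq_last_first (fun l => wronskian (vplus l) (f (vminus l)) / RtoC (qq p l))%C).
intros l Hl.
assert (Hq0 := qq_neq0 l ltac:(lia)).
assert (Hq1 := qq_neq0 (S l) ltac:(lia)).
rewrite (plus_vec_pred l Hl); unfold Rmat.
rewrite wronskian_mv_inv2, <- Hf, det2_Lmat, RtoC_div by exact Hq0.
cbn [minus_vec].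
field; split; apply RtoC_neq0; assumption.
Qed.

Lemma lorentz_form_minus_vec : lorentz_form (vminus n) = - (qq p n / qq p 0).
Proof.
assert (Hq0 := qq_neq0 0 ltac:(lia)).
assert (Hconst : lorentz_form (vminus n) / qq p n = lorentz_form (vminus 0) / qq p 0).
{ apply (eq_last_first (fun l => lorentz_form (vminus l) / qq p l)).
  intros l Hl; cbn [minus_vec].
  rewrite lorentz_form_mv_Lmat.
  field; split; apply qq_neq0; lia. }
unfold lorentz_form in Hconst at 2; cbn [minus_vec fst snd] in Hconst.
rewrite Cmod_0, Cmod_1 in Hconst.
replace (lorentz_form (vminus n)) with (lorentz_form (vminus n) / qq p n * qq p n)
  by (field; apply qq_neq0; lia).
rewrite Hconst; field; exact Hq0.
Qed.

Lemma wronskian_boundary (f : V2 -> V2) :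
  (forall k v, f (mv (Lmat t p (S k) lam) v) = mv (Lmat t p (S k) lam) (f v)) ->
  wronskian (vplus 0) (f (RtoC 0, RtoC 1)) =
  (RtoC (qq p 0 / qq p n) * wronskian (RtoC 1, RtoC 0) (f (vminus n)))%C.
Proof.
intro Hf.
pose proof (wronskian_plus_minus_conserved f Hf) as H.
rewrite Nat.sub_diag in H; cbn [plus_vec minus_vec] in H.
assert (Hq0 : RtoC (qq p 0) <> 0) by (apply RtoC_neq0, qq_neq0; lia).
assert (Hqn : RtoC (qq p n) <> 0) by (apply RtoC_neq0, qq_neq0; lia).
rewrite RtoC_div by (apply qq_neq0; lia).
replace (wronskian (vplus 0) (f (RtoC 0, RtoC 1)))
  with (wronskian (vplus 0) (f (RtoC 0, RtoC 1)) / qq p 0 * qq p 0)%C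
  by (field; exact Hq0).
rewrite <- H; field; exact Hqn.
Qed.

Lemma a_plus_0_eq : a_plus t p n lam 0 = (RtoC (qq p 0 / qq p n) * b_minus t p lam n)%C.
Proof.
pose proof (wronskian_boundary (fun v => v) (fun _ _ => eq_refl)) as H.
unfold wronskian in H; cbn [fst snd] in H.
unfold a_plus, b_minus.
transitivity (fst (vplus 0) * 1 - snd (vplus 0) * 0)%C; [ring|].
rewrite H; ring.
Qed.

Lemma b_plus_0_eq :
  b_plus t p n lam 0 = (RtoC (- (qq p 0 / qq p n)) * Cconj (a_minus t p lam n))%C.
Proof.
pose proof (wronskian_boundary conj_swap (fun k => conj_swap_mv_Lmat t p k lam)) as H.
unfold wronskian, conj_swap in H; cbn [fst snd] in H.
rewrite !Cconj_RtoC in H.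
unfold b_plus, a_minus.
transitivity (- (fst (vplus 0) * 0 - snd (vplus 0) * 1))%C; [ring|].
rewrite H, RtoC_opp; ring.
Qed.

End Connection.

Theorem corollary3p5 (n : nat) (t p : nat -> R) :
  (1 <= n)%nat ->
  (forall k, (1 <= k)%nat -> (k < n)%nat -> t k < t (S k)) ->
  (forall k, (k <= n)%nat -> 0 < p k) ->
  forall lam : R, 0 < lam ->
    let q := qq p in
    Cmod (b_plus t p n lam 0) ^ 2 / q 0%nat ^ 2 + / (q 0%nat * q n)
      = Cmod (a_plus t p n lam 0) ^ 2 / q 0%nat ^ 2 /\
    Cmod (a_plus t p n lam 0) ^ 2 / q 0%nat ^ 2
      = Cmod (b_minus t p lam n) ^ 2 / q n ^ 2 /\
    Cmod (b_minus t p lam n) ^ 2 / q n ^ 2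
      = / (q 0%nat * q n) + Cmod (a_minus t p lam n) ^ 2 / q n ^ 2.
Proof.
intros _ _ Hp lam _ q.
assert (Hq0 : 0 < q 0%nat) by (apply qq_gt0, Hp; lia).
assert (Hqn : 0 < q n) by (apply qq_gt0, Hp; lia).
rewrite (a_plus_0_eq t p n lam Hp), (b_plus_0_eq t p n lam Hp).
rewrite !Cmod_scal_sq, Cmod_conj.
pose proof (lorentz_form_minus_vec t p n lam Hp) as Hlorentz.
unfold lorentz_form in Hlorentz; fold q in Hlorentz |- *.
replace (Cmod (b_minus t p lam n) ^ 2) with (Cmod (a_minus t p lam n) ^ 2 + q n / q 0%nat)
  by (unfold a_minus, b_minus; lra).
split; [|split]; field; lra.
Qed.
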